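(* Let $n\in\mathbb{N}$, $n\ge2$, and $\lambda\in(2n-1,2n)$. If $\phi(x)=1$, or $\phi(x)=(1-x^p)^q$ with $p\ge1$ and $q>0$, then the scheme $S_{1,\mathbf{w}^\lambda}$ is $\mathcal{C}^1$, i.e. it is uniformly convergent and every limit function $S^\infty_{1,\mathbf{w}^\lambda}\mathbf{f}^0$ (for bounded initial data $\mathbf{f}^0$) is continuously differentiable.
   Context: Put $w^\lambda_m=\phi(|m|/\lambda)$ for $m\in\mathbb{Z}$, $|m|<\lambda$, and $M_i=\{m\in\mathbb{Z}: m\equiv i \pmod 2,\ |m|<\lambda\}$, $i\in\{0,1\}$. The scheme $S_{1,\mathbf{w}^\lambda}$ (weighted local polynomial regression scheme of degree 1, which coincides with degree 0) is \[ (S_{1,\mathbf{w}^\lambda}\mathbf{f})_{2j+i}=\frac{\sum_{m\in M_i} w^\lambda_m f_{j+(m+i)/2}}{\sum_{m\in M_i} w^\lambda_m},\qquad i\in\{0,1\},\ j\in\mathbb{Z}. \] Uniform convergence: for every bounded $\mathbf{f}^0$ there is a continuous $F=S^\infty\mathbf{f}^0$ with $\lim_{k\to\infty}\sup_j|(S^k\mathbf{f}^0)_j-F(2^{-k}j)|=0$. *)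

From Stdlib Require Import Reals Lra ZArith List.
From Coquelicot Require Import Coquelicot.
Open Scope R_scope.

(* Real power x^y for x >= 0 (with 0^y = 0, used only for y > 0). *)
Definition rpow (x y : R) : R :=
  if Rle_dec x 0 then 0 else Rpower x y.

Definition zseq := Z -> R.

(* Candidate integers m with |m| <= up lambda, i.e. a superset of {m : |m| < lambda}. *)
Definition zrange (K : Z) : list Z :=
  map (fun k => (Z.of_nat k - K)%Z) (seq 0 (Z.to_nat (2 * K + 1))).

Definition Mset (lambda : R) (i : Z) : list Z :=
  filter (fun m => (Z.eqb (Z.modulo m 2) i) &&
                   (if Rlt_dec (Rabs (IZR m)) lambda then true else false))%bool
         (zrange (up lambda)).

Definition wgt (phi : R -> R) (lambda : R) (m : Z) : R :=
  phi (Rabs (IZR m) / lambda).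

Definition sumZ (l : list Z) (g : Z -> R) : R :=
  fold_right (fun m acc => g m + acc) 0 l.

Definition S1 (phi : R -> R) (lambda : R) (f : zseq) : zseq :=
  fun k =>
    let j := Z.div k 2 in
    let i := Z.modulo k 2 in
    sumZ (Mset lambda i) (fun m => wgt phi lambda m * f (j + Z.div (m + i) 2)%Z)
    / sumZ (Mset lambda i) (fun m => wgt phi lambda m).

Definition bounded_seq (f : zseq) : Prop :=
  exists B, forall j, Rabs (f j) <= B.

Definition is_limit_function (S : zseq -> zseq) (f0 : zseq) (F : R -> R) : Prop :=
  (forall x, continuous F x) /\
  forall eps, 0 < eps -> exists K : nat, forall k : nat, (K <= k)%nat ->
    forall j : Z, Rabs (Nat.iter k S f0 j - F (IZR j / 2 ^ k)) <= eps.

Definition uniformly_convergent (S : zseq -> zseq) : Prop :=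
  forall f0, bounded_seq f0 -> exists F, is_limit_function S f0 F.

Definition C1_function (F : R -> R) : Prop :=
  forall x, ex_derive F x /\ continuous (Derive F) x.

Definition C1_scheme (S : zseq -> zseq) : Prop :=
  uniformly_convergent S /\
  forall f0 F, bounded_seq f0 -> is_limit_function S f0 F -> C1_function F.

(* The differences of [S f] are half of [T (fdiff f)], where [T] is a scheme whose two masks
   are differences of partial sums of the masks of [S] (summation by parts).  Log-concavity of
   [m |-> w_m] makes these masks positive, so [T] averages [2 n - 1] neighbours with weights
   bounded below by some [theta > 0]; two steps of [T] then shrink the oscillation over windows
   of length [4 n] by the factor [1 - theta ^ 4], hence [T] is contractive and converges to
   continuous limits.  [S] converges as well, and on dyadic grids its increments are averages of
   values of [T], so its limit is a primitive of the limit of [T] on [fdiff f0], hence [C^1].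
   Both weight families are log-concave because [1 - |x| ^ p] is, by convexity of [|x| ^ p]. *)

From Stdlib Require Import Reals Lra Lia ZArith List Bool FunctionalExtensionality.
From Coquelicot Require Import Coquelicot.
Open Scope R_scope.

Fixpoint ssum (N : nat) (F : nat -> R) : R :=
  match N with O => 0 | S N' => ssum N' F + F N' end.

Lemma ssum_S N F : ssum (S N) F = ssum N F + F N.
Proof. reflexivity. Qed.

Lemma ssum_ext N F G : (forall t, (t < N)%nat -> F t = G t) -> ssum N F = ssum N G.
Proof.
  induction N as [|N IH]; intros H; simpl; [reflexivity|].
  rewrite IH by (intros; apply H; lia). rewrite H by lia. reflexivity.
Qed.

Lemma ssum_plus N F G : ssum N (fun t => F t + G t) = ssum N F + ssum N G.
Proof. induction N; simpl; [lra|]. rewrite IHN; lra. Qed.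

Lemma ssum_minus N F G : ssum N (fun t => F t - G t) = ssum N F - ssum N G.
Proof. induction N; simpl; [lra|]. rewrite IHN; lra. Qed.

Lemma ssum_opp N F : ssum N (fun t => - F t) = - ssum N F.
Proof. induction N; simpl; [lra|]. rewrite IHN; lra. Qed.

Lemma ssum_scal N c F : ssum N (fun t => c * F t) = c * ssum N F.
Proof. induction N; simpl; [lra|]. rewrite IHN; lra. Qed.

Lemma ssum_div N F c : ssum N (fun t => F t / c) = ssum N F / c.
Proof. unfold Rdiv. rewrite Rmult_comm, <- ssum_scal. apply ssum_ext. intros; ring. Qed.

Lemma ssum_const N c : ssum N (fun _ => c) = INR N * c.
Proof. induction N; simpl ssum; [simpl; lra|]. rewrite IHN, S_INR; lra. Qed.

Lemma ssum_le N F G : (forall t, (t < N)%nat -> F t <= G t) -> ssum N F <= ssum N G.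
Proof.
  induction N; simpl; intros H; [lra|].
  pose proof (H N ltac:(lia)); pose proof (IHN ltac:(intros; apply H; lia)); lra.
Qed.

Lemma ssum_pos N F : (0 < N)%nat -> (forall t, (t < N)%nat -> 0 < F t) -> 0 < ssum N F.
Proof.
  intros HN H. destruct N as [|N]; [lia|]. rewrite ssum_S.
  pose proof (ssum_le N (fun _ => 0) F ltac:(intros; left; apply H; lia)).
  rewrite ssum_const, Rmult_0_r in H0. pose proof (H N ltac:(lia)). lra.
Qed.

Lemma ssum_abs N F : Rabs (ssum N F) <= ssum N (fun t => Rabs (F t)).
Proof.
  induction N; simpl; [rewrite Rabs_R0; lra|].
  eapply Rle_trans; [apply Rabs_triang|]. lra.
Qed.

Lemma ssum_Sl N F : ssum (S N) F = F 0%nat + ssum N (fun t => F (S t)).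
Proof. induction N; simpl in *; [lra|]. rewrite IHN. lra. Qed.

Lemma ssum_add N M F : ssum (N + M) F = ssum N F + ssum M (fun t => F (N + t)%nat).
Proof.
  induction M; simpl; [rewrite Nat.add_0_r; lra|].
  rewrite Nat.add_succ_r; simpl. rewrite IHM; lra.
Qed.

Lemma ssum_rev N F : ssum N F = ssum N (fun t => F (N - 1 - t)%nat).
Proof.
  induction N; [reflexivity|].
  rewrite ssum_S, IHN, ssum_Sl, Rplus_comm.
  f_equal; [f_equal; lia|]. apply ssum_ext; intros t Ht. f_equal. lia.
Qed.

Lemma ssum_double N F : ssum (2 * N) F = ssum N (fun t => F (2 * t)%nat + F (2 * t + 1)%nat).
Proof.
  induction N; [reflexivity|].
  replace (2 * S N)%nat with (S (S (2 * N))) by lia.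
  rewrite !ssum_S, IHN. replace (S (2 * N)) with (2 * N + 1)%nat by lia. lra.
Qed.

Lemma ssum_mult N M F G :
  ssum N F * ssum M G = ssum N (fun a => ssum M (fun b => F a * G b)).
Proof. induction N; simpl; [ring|]. rewrite <- IHN, ssum_scal. ring. Qed.

Lemma ssum_delta N t0 F : (t0 < N)%nat ->
  ssum N (fun t => if Nat.eqb t t0 then F t else 0) = F t0.
Proof.
  induction N; intros H; [lia|]. simpl. destruct (Nat.eq_dec t0 N) as [->|Hne].
  - rewrite Nat.eqb_refl, (ssum_ext N _ (fun _ => 0)), ssum_const; [lra|].
    intros t Ht. destruct (Nat.eqb_spec t N); [lia|reflexivity].
  - rewrite IHN by lia. destruct (Nat.eqb_spec N t0); [lia|lra].
Qed.

Lemma ssum_first_moment N F : (forall t, (t < N)%nat -> F t = F (N - 1 - t)%nat) ->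
  ssum N (fun t => INR t * F t) = (INR N - 1) / 2 * ssum N F.
Proof.
  intros Hsym.
  assert (Hrev : ssum N (fun t => INR t * F t) = ssum N (fun t => (INR N - 1 - INR t) * F t)).
  { rewrite ssum_rev. apply ssum_ext; intros t Ht.
    rewrite <- Hsym, !minus_INR by lia. simpl. ring. }
  assert (Hsum : ssum N (fun t => INR t * F t) + ssum N (fun t => (INR N - 1 - INR t) * F t)
                 = (INR N - 1) * ssum N F).
  { rewrite <- ssum_plus, <- ssum_scal. apply ssum_ext; intros; ring. }
  lra.
Qed.

Definition convex_weights N (c : nat -> R) :=
  (forall t, (t < N)%nat -> 0 <= c t) /\ ssum N c = 1.

Section ConvexCombination.
Variables (N : nat) (c : nat -> R).
Hypothesis Hc : convex_weights N c.

Lemma convex_sub g Y : ssum N (fun t => c t * g t) - Y = ssum N (fun t => c t * (g t - Y)).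
Proof.
  destruct Hc as [_ Hsum].
  rewrite (ssum_ext N (fun t => c t * (g t - Y)) (fun t => c t * g t - Y * c t)) by (intros; ring).
  rewrite ssum_minus, ssum_scal, Hsum. ring.
Qed.

Lemma convex_le e d : (forall t, (t < N)%nat -> e t <= d) -> ssum N (fun t => c t * e t) <= d.
Proof.
  destruct Hc as [Hnn Hsum]. intros H.
  apply Rle_trans with (ssum N (fun t => d * c t)).
  - apply ssum_le; intros t Ht. specialize (Hnn t Ht); specialize (H t Ht). nra.
  - rewrite ssum_scal, Hsum; lra.
Qed.

Lemma convex_le_gap e d t0 dl : (t0 < N)%nat ->
  (forall t, (t < N)%nat -> e t <= d) -> e t0 <= d - dl ->
  ssum N (fun t => c t * e t) <= d - c t0 * dl.
Proof.
  destruct Hc as [Hnn Hsum]. intros Ht0 H H0.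
  apply Rle_trans with (ssum N (fun t => d * c t - (if Nat.eqb t t0 then c t * dl else 0))).
  - apply ssum_le; intros t Ht. specialize (Hnn t Ht); specialize (H t Ht).
    destruct (Nat.eqb_spec t t0); [subst|]; nra.
  - rewrite ssum_minus, ssum_scal, Hsum, (ssum_delta N t0 (fun t => c t * dl)) by exact Ht0. lra.
Qed.

Lemma convex_abs_le g : Rabs (ssum N (fun t => c t * g t)) <= ssum N (fun t => c t * Rabs (g t)).
Proof.
  destruct Hc as [Hnn _]. eapply Rle_trans; [apply ssum_abs|].
  apply ssum_le; intros t Ht. rewrite Rabs_mult, (Rabs_pos_eq (c t)) by auto. lra.
Qed.

Lemma convex_abs_bound g M : (forall t, (t < N)%nat -> Rabs (g t) <= M) ->
  Rabs (ssum N (fun t => c t * g t)) <= M.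
Proof. intros H. eapply Rle_trans; [apply convex_abs_le|]. now apply convex_le. Qed.

End ConvexCombination.

Lemma convex_pair N M c e g g' d : convex_weights N c -> convex_weights M e ->
  (forall t s, (t < N)%nat -> (s < M)%nat -> Rabs (g t - g' s) <= d) ->
  Rabs (ssum N (fun t => c t * g t) - ssum M (fun s => e s * g' s)) <= d.
Proof.
  intros Hc He H. rewrite convex_sub by exact Hc. apply (convex_abs_bound N c Hc). intros t Ht.
  rewrite Rabs_minus_sym, convex_sub by exact He. apply (convex_abs_bound M e He). intros s Hs.
  rewrite Rabs_minus_sym. auto.
Qed.

Lemma convex_pair_gap N M c e g g' d t0 s0 dl : convex_weights N c -> convex_weights M e ->
  (t0 < N)%nat -> (s0 < M)%nat ->
  (forall t s, (t < N)%nat -> (s < M)%nat -> Rabs (g t - g' s) <= d) ->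
  Rabs (g t0 - g' s0) <= d - dl ->
  Rabs (ssum N (fun t => c t * g t) - ssum M (fun s => e s * g' s)) <= d - c t0 * (e s0 * dl).
Proof.
  intros Hc He Ht0 Hs0 H H0.
  set (Y := ssum M (fun s => e s * g' s)).
  assert (Hrow : forall t, Rabs (g t - Y) = Rabs (ssum M (fun s => e s * (g' s - g t)))).
  { intros t. rewrite Rabs_minus_sym. unfold Y. now rewrite convex_sub. }
  rewrite convex_sub by exact Hc. eapply Rle_trans; [now apply convex_abs_le|].
  apply (convex_le_gap N c Hc); [exact Ht0| |].
  - intros t Ht. rewrite Hrow. apply (convex_abs_bound M e He). intros s Hs.
    rewrite Rabs_minus_sym. auto.
  - rewrite Hrow. eapply Rle_trans; [now apply convex_abs_le|].
    apply (convex_le_gap M e He); [exact Hs0| |]; intros; rewrite Rabs_minus_sym; auto.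
Qed.

Definition fdiff (g : zseq) : zseq := fun j => g (j + 1)%Z - g j.

Definition diff_le (g : zseq) (d : R) : Prop := forall j, Rabs (fdiff g j) <= d.

Lemma diff_le_nonneg g d : diff_le g d -> 0 <= d.
Proof. intros H. eapply Rle_trans; [apply Rabs_pos|apply (H 0%Z)]. Qed.

Lemma diff_le_of_bounded f : bounded_seq f -> exists d, diff_le f d.
Proof.
  intros [B HB]. exists (2 * B). intros j. unfold fdiff.
  eapply Rle_trans; [apply Rabs_triang|]. rewrite Rabs_Ropp.
  pose proof (HB (j + 1)%Z); pose proof (HB j). lra.
Qed.

Lemma diff_le_fdiff f d : diff_le f d -> diff_le (fdiff f) (2 * d).
Proof.
  intros H j. unfold fdiff at 1. eapply Rle_trans; [apply Rabs_triang|]. rewrite Rabs_Ropp.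
  pose proof (H (j + 1)%Z); pose proof (H j). lra.
Qed.

Lemma fdiff_telescope u A N :
  u (A + Z.of_nat N)%Z - u A = ssum N (fun i => fdiff u (A + Z.of_nat i)%Z).
Proof.
  induction N; [simpl; rewrite Z.add_0_r; lra|].
  rewrite ssum_S, <- IHN. unfold fdiff.
  replace (A + Z.of_nat (S N))%Z with (A + Z.of_nat N + 1)%Z by lia. ring.
Qed.

Lemma ssum_by_parts P c f L :
  ssum (S P) (fun t => c t * f (L + Z.of_nat t)%Z) =
  ssum (S P) c * f (L + Z.of_nat P)%Z - ssum P (fun t => ssum (S t) c * fdiff f (L + Z.of_nat t)%Z).
Proof.
  induction P.
  - simpl. rewrite Z.add_0_r. ring.
  - rewrite ssum_S, IHP, (ssum_S P (fun t => ssum (S t) c * _)), (ssum_S (S P) c).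
    unfold fdiff. replace (L + Z.of_nat P + 1)%Z with (L + Z.of_nat (S P))%Z by lia. ring.
Qed.

Lemma diff_le_dist g d : diff_le g d -> forall a b, Rabs (g a - g b) <= IZR (Z.abs (a - b)) * d.
Proof.
  intros H.
  assert (Hup : forall a (m : nat), Rabs (g (a + Z.of_nat m)%Z - g a) <= INR m * d).
  { intros a m. rewrite fdiff_telescope, <- ssum_const.
    eapply Rle_trans; [apply ssum_abs|]. apply ssum_le; auto. }
  intros a b. destruct (Z.le_gt_cases b a) as [Hba|Hab].
  - pose proof (Hup b (Z.to_nat (a - b))) as Hm.
    rewrite INR_IZR_INZ, Z2Nat.id in Hm by lia.
    replace (b + (a - b))%Z with a in Hm by lia. now rewrite Z.abs_eq by lia.
  - pose proof (Hup a (Z.to_nat (b - a))) as Hm.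
    rewrite INR_IZR_INZ, Z2Nat.id in Hm by lia.
    replace (a + (b - a))%Z with b in Hm by lia.
    rewrite Rabs_minus_sym, Z.abs_neq by lia. now replace (- (a - b))%Z with (b - a)%Z by lia.
Qed.

Lemma Int_part_bounds x : IZR (Int_part x) <= x < IZR (Int_part x) + 1.
Proof. pose proof (base_Int_part x). lra. Qed.

Lemma Int_part_IZR j : Int_part (IZR j) = j.
Proof. symmetry. apply Int_part_spec. lra. Qed.

Lemma Int_part_double_div2 y : (Int_part (2 * y) / 2)%Z = Int_part y.
Proof.
  apply Int_part_spec. pose proof (Int_part_bounds (2 * y)).
  set (J := Int_part (2 * y)) in *.
  assert (Hq : (2 * (J / 2) <= J <= 2 * (J / 2) + 1)%Z) by (Z.div_mod_to_equations; lia).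
  destruct Hq as [Ha Hb]. apply IZR_le in Ha, Hb.
  rewrite mult_IZR in Ha. rewrite plus_IZR, mult_IZR in Hb. simpl in *. lra.
Qed.

Lemma Int_part_close x y : Rabs (x - y) < 1 -> (Z.abs (Int_part x - Int_part y) <= 1)%Z.
Proof.
  intros H. pose proof (Int_part_bounds x); pose proof (Int_part_bounds y).
  apply Rabs_def2 in H.
  assert (IZR (Int_part x - Int_part y) < 2 /\ -2 < IZR (Int_part x - Int_part y)) as [A B]
    by (rewrite minus_IZR; lra).
  apply lt_IZR in A, B. lia.
Qed.

Lemma le_of_le_plus_eps a b K : 0 <= K -> (forall eta, 0 < eta -> a <= b + eta * K) -> a <= b.
Proof.
  intros HK H. apply Rle_plus_epsilon. intros eps Heps.
  specialize (H (eps / (K + 1)) ltac:(apply Rdiv_lt_0_compat; lra)).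
  assert (eps / (K + 1) * K <= eps); [|lra].
  apply Rle_trans with (eps / (K + 1) * (K + 1)); [|right; field; lra].
  apply Rmult_le_compat_l; [left; apply Rdiv_lt_0_compat|]; lra.
Qed.

Lemma geometric_small mu A eps : 0 <= mu < 1 -> 0 < eps ->
  exists N, forall n, (N <= n)%nat -> A * mu ^ n < eps.
Proof.
  intros Hmu He.
  destruct (pow_lt_1_zero mu ltac:(rewrite Rabs_pos_eq; lra) (eps / (Rabs A + 1))
              ltac:(apply Rdiv_lt_0_compat; pose proof (Rabs_pos A); lra)) as [N HN].
  exists N. intros n Hn. specialize (HN n Hn). rewrite Rabs_pos_eq in HN by (apply pow_le; lra).
  assert (0 <= mu ^ n) by (apply pow_le; lra). pose proof (Rabs_pos A).
  apply Rle_lt_trans with ((Rabs A + 1) * mu ^ n).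
  - pose proof (Rle_abs A). nra.
  - apply Rmult_lt_compat_l with (r := Rabs A + 1) in HN; [|lra].
    replace ((Rabs A + 1) * (eps / (Rabs A + 1))) with eps in HN by (field; lra). exact HN.
Qed.

Lemma inv_pow2_small r : 0 < r -> exists N, forall k, (N <= k)%nat -> / 2 ^ k < r.
Proof.
  intros Hr. destruct (geometric_small (/ 2) 1 r ltac:(lra) Hr) as [N HN]. exists N.
  intros k Hk. specialize (HN k Hk). rewrite Rmult_1_l, pow_inv in HN. exact HN.
Qed.

Lemma continuous_eps_delta f x : continuous f x <->
  forall eps, 0 < eps -> exists del, 0 < del /\
    forall y, Rabs (y - x) < del -> Rabs (f y - f x) < eps.
Proof.
  unfold continuous. rewrite <- continuity_pt_filterlim.
  unfold continuity_pt, continue_in, limit1_in, limit_in; simpl; unfold Rdist. split.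
  - intros H eps He. destruct (H eps He) as [del [Hdel Hf]]. exists del. split; [lra|].
    intros y Hy. destruct (Req_dec y x) as [->|Hne].
    + rewrite Rminus_diag, Rabs_R0. lra.
    + apply Hf. repeat split; auto.
  - intros H eps He. destruct (H eps He) as [del [Hdel Hf]].
    exists del. split; [lra|]. intros y [_ Hy]. auto.
Qed.

Section ContractiveScheme.
Variable T : zseq -> zseq.
Variables C D0 mu : R.
Hypothesis HC : 0 <= C.
Hypothesis HD0 : 0 <= D0.
Hypothesis Hmu : 0 < mu < 1.
Hypothesis T_step : forall g d, diff_le g d -> forall i, Rabs (T g i - g (i / 2)%Z) <= C * d.
Hypothesis T_contract :
  forall g d, diff_le g d -> forall k, diff_le (Nat.iter k T g) (D0 * mu ^ k * d).

Variables (g : zseq) (d : R).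
Hypothesis Hg : diff_le g d.

Let P k x := Nat.iter k T g (Int_part (x * 2 ^ k)).
Let K0 := C * D0 * d.
Let err k := K0 * mu ^ k / (1 - mu).

Let Hd : 0 <= d := diff_le_nonneg g d Hg.

Let HK0 : 0 <= K0.
Proof. unfold K0. apply Rmult_le_pos; [apply Rmult_le_pos|]; auto. Qed.

Lemma step_function_succ k x : Rabs (P (S k) x - P k x) <= K0 * mu ^ k.
Proof.
  unfold P. replace (x * 2 ^ S k) with (2 * (x * 2 ^ k)) by (simpl; ring).
  rewrite <- (Int_part_double_div2 (x * 2 ^ k)). simpl Nat.iter.
  eapply Rle_trans; [apply T_step, T_contract, Hg|]. unfold K0. lra.
Qed.

Lemma step_function_cauchy k m x : (k <= m)%nat -> Rabs (P m x - P k x) <= err k.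
Proof.
  intros Hkm.
  assert (Hpart : forall j,
            Rabs (P (k + j)%nat x - P k x) <= K0 * (mu ^ k - mu ^ (k + j)) / (1 - mu)).
  { induction j.
    - rewrite Nat.add_0_r, !Rminus_diag, Rabs_R0. unfold Rdiv. lra.
    - rewrite Nat.add_succ_r.
      replace (P (S (k + j)) x - P k x)
        with ((P (S (k + j)) x - P (k + j)%nat x) + (P (k + j)%nat x - P k x)) by ring.
      eapply Rle_trans; [apply Rabs_triang|].
      pose proof (step_function_succ (k + j) x).
      replace (K0 * (mu ^ k - mu ^ S (k + j)) / (1 - mu))
        with (K0 * mu ^ (k + j) + K0 * (mu ^ k - mu ^ (k + j)) / (1 - mu)) by (simpl; field; lra).
      lra. }
  replace m with (k + (m - k))%nat by lia. eapply Rle_trans; [apply Hpart|].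
  unfold err, Rdiv. apply Rmult_le_compat_r; [left; apply Rinv_0_lt_compat; lra|].
  assert (0 <= mu ^ (k + (m - k))) by (apply pow_le; lra). nra.
Qed.

Lemma err_small eps : 0 < eps -> exists N, forall k, (N <= k)%nat -> err k < eps.
Proof.
  intros He. destruct (geometric_small mu (K0 / (1 - mu)) eps ltac:(lra) He) as [N HN].
  exists N. intros k Hk. specialize (HN k Hk). unfold err.
  replace (K0 * mu ^ k / (1 - mu)) with (K0 / (1 - mu) * mu ^ k) by (field; lra). exact HN.
Qed.

Lemma step_function_Cauchy_crit x : Cauchy_crit (fun m => P m x).
Proof.
  intros eps He. destruct (err_small (eps / 2) ltac:(lra)) as [N HN]. exists N.
  intros k m Hk Hm. unfold Rdist.
  pose proof (step_function_cauchy N k x Hk); pose proof (step_function_cauchy N m x Hm).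
  specialize (HN N (le_n _)).
  replace (P k x - P m x) with ((P k x - P N x) - (P m x - P N x)) by ring.
  eapply Rle_lt_trans; [apply Rabs_triang|]. rewrite Rabs_Ropp. lra.
Qed.

Definition limit_fun x : R :=
  proj1_sig (Rcomplete.R_complete (fun m => P m x) (step_function_Cauchy_crit x)).

Lemma limit_fun_approx k x : Rabs (limit_fun x - P k x) <= err k.
Proof.
  unfold limit_fun.
  destruct (Rcomplete.R_complete (fun m => P m x) (step_function_Cauchy_crit x)) as [l Hl]; simpl.
  apply (le_of_le_plus_eps _ _ 1); [lra|]. intros eta Heta.
  destruct (Hl eta Heta) as [N HN]. specialize (HN (Nat.max N k) ltac:(lia)). unfold Rdist in HN.
  pose proof (step_function_cauchy k (Nat.max N k) x ltac:(lia)).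
  replace (l - P k x) with ((P (Nat.max N k) x - P k x) - (P (Nat.max N k) x - l)) by ring.
  eapply Rle_trans; [apply Rabs_triang|]. rewrite Rabs_Ropp. lra.
Qed.

Lemma step_function_near k x y : Rabs (y - x) < / 2 ^ k ->
  Rabs (P k y - P k x) <= D0 * mu ^ k * d.
Proof.
  intros Hy. assert (H2k : 0 < 2 ^ k) by (apply pow_lt; lra).
  assert (Hclose : Rabs (y * 2 ^ k - x * 2 ^ k) < 1).
  { rewrite <- Rmult_minus_distr_r, Rabs_mult, (Rabs_pos_eq (2 ^ k)) by lra.
    apply Rmult_lt_compat_r with (r := 2 ^ k) in Hy; auto. rewrite Rinv_l in Hy; lra. }
  apply Int_part_close, IZR_le in Hclose.
  eapply Rle_trans; [apply (diff_le_dist _ _ (T_contract g d Hg k))|].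
  assert (0 <= D0 * mu ^ k * d).
  { apply Rmult_le_pos; [apply Rmult_le_pos; [|apply pow_le]|]; lra. }
  simpl in Hclose. nra.
Qed.

Lemma limit_fun_continuous x : continuous limit_fun x.
Proof.
  apply continuous_eps_delta. intros eps He.
  destruct (geometric_small mu (2 * (K0 / (1 - mu)) + D0 * d) eps ltac:(lra) He) as [k Hk].
  specialize (Hk k (le_n _)).
  exists (/ 2 ^ k). split; [apply Rinv_0_lt_compat, pow_lt; lra|]. intros y Hy.
  pose proof (step_function_near k x y Hy). pose proof (limit_fun_approx k y).
  pose proof (limit_fun_approx k x).
  replace (limit_fun y - limit_fun x)
    with ((limit_fun y - P k y) - (limit_fun x - P k x) + (P k y - P k x)) by ring.
  eapply Rle_lt_trans; [apply Rabs_triang|].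
  eapply Rle_lt_trans; [apply Rplus_le_compat_r, Rabs_triang|]. rewrite Rabs_Ropp.
  unfold err in *.
  replace (K0 * mu ^ k / (1 - mu)) with (K0 / (1 - mu) * mu ^ k) in * by (field; lra).
  lra.
Qed.

Lemma limit_fun_is_limit : is_limit_function T g limit_fun.
Proof.
  split; [apply limit_fun_continuous|]. intros eps He.
  destruct (err_small eps He) as [K HK]. exists K. intros k Hk j.
  pose proof (limit_fun_approx k (IZR j / 2 ^ k)) as H. unfold P in H.
  replace (IZR j / 2 ^ k * 2 ^ k) with (IZR j) in H by (field; apply pow_nonzero; lra).
  rewrite Int_part_IZR, Rabs_minus_sym in H. specialize (HK k Hk). lra.
Qed.

End ContractiveScheme.

Theorem contractive_scheme_converges (T : zseq -> zseq) C D0 mu :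
  0 <= C -> 0 <= D0 -> 0 < mu < 1 ->
  (forall g d, diff_le g d -> forall i, Rabs (T g i - g (i / 2)%Z) <= C * d) ->
  (forall g d, diff_le g d -> forall k, diff_le (Nat.iter k T g) (D0 * mu ^ k * d)) ->
  forall g d, diff_le g d -> exists F, is_limit_function T g F.
Proof.
  intros HC HD0 Hmu Hstep Hcontract g d Hg.
  eexists. exact (limit_fun_is_limit T C D0 mu HC HD0 Hmu Hstep Hcontract g d Hg).
Qed.

Lemma dyadic_between y z m : y < z -> / 2 ^ m < (z - y) / 2 ->
  exists A N, y < IZR A / 2 ^ m <= y + / 2 ^ m /\
              z - / 2 ^ m < IZR (A + Z.of_nat N) / 2 ^ m <= z.
Proof.
  intros Hyz Hm. assert (H2m : 0 < 2 ^ m) by (apply pow_lt; lra).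
  pose proof (Int_part_bounds (y * 2 ^ m)) as Hy; pose proof (Int_part_bounds (z * 2 ^ m)) as Hz.
  set (A := (Int_part (y * 2 ^ m) + 1)%Z). set (B := Int_part (z * 2 ^ m)) in *.
  assert (Hscale : forall u v, u / 2 ^ m <= v <-> u <= v * 2 ^ m).
  { intros u v. split; intros H.
    - apply Rmult_le_compat_r with (r := 2 ^ m) in H; [|lra]. field_simplify in H; lra.
    - apply Rmult_le_reg_r with (2 ^ m); [lra|]. field_simplify; lra. }
  assert (Hscale' : forall u v, v < u / 2 ^ m <-> v * 2 ^ m < u).
  { intros u v. split; intros H.
    - apply Rmult_lt_compat_r with (r := 2 ^ m) in H; [|lra]. field_simplify in H; lra.
    - apply Rmult_lt_reg_r with (2 ^ m); [lra|]. field_simplify; lra. }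
  assert (Hinv : / 2 ^ m * 2 ^ m = 1) by (field; lra).
  assert (HA : IZR A = IZR (Int_part (y * 2 ^ m)) + 1) by (unfold A; rewrite plus_IZR; reflexivity).
  assert (HAB : (A <= B)%Z).
  { apply le_IZR. rewrite HA. apply Rmult_lt_compat_r with (r := 2 ^ m) in Hm; [|lra].
    replace ((z - y) / 2 * 2 ^ m) with ((z * 2 ^ m - y * 2 ^ m) / 2) in Hm by (field; lra).
    lra. }
  exists A, (Z.to_nat (B - A)). rewrite Z2Nat.id by lia. replace (A + (B - A))%Z with B by ring.
  repeat split.
  - apply Hscale'. rewrite HA. lra.
  - apply Hscale. rewrite HA, Rmult_plus_distr_r, Hinv. lra.
  - apply Hscale'. rewrite Rmult_minus_distr_r, Hinv. lra.
  - apply Hscale. lra.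
Qed.

Section DerivedScheme.
Variables S T : zseq -> zseq.
Variable C' : R.
Hypothesis HC' : 0 <= C'.
Hypothesis S_step : forall f d, diff_le f d -> forall i, Rabs (S f i - f (i / 2)%Z) <= C' * d.
Hypothesis S_fdiff : forall f k, fdiff (S f) k = / 2 * T (fdiff f) k.
Hypothesis T_scal : forall h c k, T (fun l => c * h l) k = c * T h k.
Hypothesis T_sup : forall h M, (forall l, Rabs (h l) <= M) -> forall k, Rabs (T h k) <= M.

Lemma iter_fdiff m f k : fdiff (Nat.iter m S f) k = / 2 ^ m * Nat.iter m T (fdiff f) k.
Proof.
  revert k. induction m; intros k; [simpl; lra|].
  simpl Nat.iter. rewrite S_fdiff.
  replace (fdiff (Nat.iter m S f)) with (fun l => / 2 ^ m * Nat.iter m T (fdiff f) l)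
    by (extensionality l; now rewrite IHm).
  rewrite T_scal. simpl. rewrite Rinv_mult. ring.
Qed.

Lemma iter_T_sup m h M : (forall l, Rabs (h l) <= M) -> forall k, Rabs (Nat.iter m T h k) <= M.
Proof. intros H. induction m; intros k; [apply H|]. simpl. now apply T_sup. Qed.

Lemma S_contract f d : diff_le f d -> forall k, diff_le (Nat.iter k S f) (1 * (/ 2) ^ k * d).
Proof.
  intros H k j. rewrite iter_fdiff, Rabs_mult, Rabs_pos_eq, pow_inv
    by (apply Rlt_le, Rinv_0_lt_compat, pow_lt; lra).
  pose proof (iter_T_sup k (fdiff f) d H j).
  assert (0 <= / 2 ^ k) by (apply Rlt_le, Rinv_0_lt_compat, pow_lt; lra). nra.
Qed.

Lemma S_uniformly_convergent : uniformly_convergent S.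
Proof.
  intros f Hf. destruct (diff_le_of_bounded f Hf) as [d Hd].
  apply (contractive_scheme_converges S C' 1 (/ 2)) with (d := d); auto; try lra.
  exact S_contract.
Qed.

Section Derivative.
Variables (f0 : zseq) (F G : R -> R).
Hypothesis HF : is_limit_function S f0 F.
Hypothesis HG : is_limit_function T (fdiff f0) G.
Variables (x0 eps del : R).
Hypothesis HG_near : forall t, Rabs (t - x0) < del -> Rabs (G t - G x0) <= eps.

(* On the grid of level [m], increments of [S^m f0] are averages of [T^m (fdiff f0)],
   which approximates [G] and hence [G x0] near [x0]. *)
Lemma dyadic_increment eta m A N :
  (forall j, Rabs (Nat.iter m S f0 j - F (IZR j / 2 ^ m)) <= eta) ->
  (forall j, Rabs (Nat.iter m T (fdiff f0) j - G (IZR j / 2 ^ m)) <= eta) ->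
  x0 - del < IZR A / 2 ^ m -> IZR (A + Z.of_nat N) / 2 ^ m < x0 + del ->
  Rabs (F (IZR (A + Z.of_nat N) / 2 ^ m) - F (IZR A / 2 ^ m) - INR N / 2 ^ m * G x0)
    <= 2 * eta + INR N / 2 ^ m * (eta + eps).
Proof.
  intros HSm HTm HA HB. assert (H2m : 0 < 2 ^ m) by (apply pow_lt; lra).
  assert (Hgrid : forall i, (i < N)%nat -> Rabs (IZR (A + Z.of_nat i) / 2 ^ m - x0) < del).
  { intros i Hi. assert (Hinv : 0 < / 2 ^ m) by (apply Rinv_0_lt_compat; lra).
    assert (IZR A / 2 ^ m <= IZR (A + Z.of_nat i) / 2 ^ m)
      by (apply Rmult_le_compat_r; [lra|apply IZR_le; lia]).
    assert (IZR (A + Z.of_nat i) / 2 ^ m < IZR (A + Z.of_nat N) / 2 ^ m)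
      by (apply Rmult_lt_compat_r; [lra|apply IZR_lt; lia]).
    apply Rabs_def1; lra. }
  set (Tsum := ssum N (fun i => Nat.iter m T (fdiff f0) (A + Z.of_nat i)%Z)).
  assert (Hsum : Rabs (Tsum - INR N * G x0) <= INR N * (eta + eps)).
  { unfold Tsum. rewrite <- ssum_const, <- ssum_minus, <- ssum_const.
    eapply Rle_trans; [apply ssum_abs|]. apply ssum_le. intros i Hi.
    specialize (HTm (A + Z.of_nat i)%Z). specialize (HG_near _ (Hgrid i Hi)).
    eapply Rle_trans; [|apply Rplus_le_compat; [exact HTm|exact HG_near]].
    eapply Rle_trans; [|apply Rabs_triang]. right. f_equal. ring. }
  assert (Htel : Nat.iter m S f0 (A + Z.of_nat N)%Z - Nat.iter m S f0 A = / 2 ^ m * Tsum).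
  { rewrite fdiff_telescope. unfold Tsum. rewrite <- ssum_scal.
    apply ssum_ext. intros; apply iter_fdiff. }
  replace (F (IZR (A + Z.of_nat N) / 2 ^ m) - F (IZR A / 2 ^ m) - INR N / 2 ^ m * G x0) with
    (- (Nat.iter m S f0 (A + Z.of_nat N)%Z - F (IZR (A + Z.of_nat N) / 2 ^ m))
     + (Nat.iter m S f0 A - F (IZR A / 2 ^ m)) + / 2 ^ m * (Tsum - INR N * G x0))
    by (rewrite Rmult_minus_distr_l, <- Htel; field; lra).
  eapply Rle_trans; [apply Rabs_triang|].
  eapply Rle_trans; [apply Rplus_le_compat_r, Rabs_triang|].
  rewrite Rabs_Ropp, Rabs_mult, (Rabs_pos_eq (/ 2 ^ m)) by (apply Rlt_le, Rinv_0_lt_compat; lra).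
  pose proof (HSm (A + Z.of_nat N)%Z); pose proof (HSm A).
  assert (/ 2 ^ m * Rabs (Tsum - INR N * G x0) <= INR N / 2 ^ m * (eta + eps)).
  { unfold Rdiv. rewrite Rmult_comm, Rmult_assoc, (Rmult_comm (/ 2 ^ m)), <- Rmult_assoc.
    apply Rmult_le_compat_r; [apply Rlt_le, Rinv_0_lt_compat|]; lra. }
  lra.
Qed.

Lemma increment_estimate y z : 0 <= eps -> x0 - del < y -> y <= z -> z < x0 + del ->
  Rabs (F z - F y - (z - y) * G x0) <= eps * (z - y).
Proof.
  intros Heps Hy Hyz Hz. destruct (Req_dec y z) as [<-|Hne].
  { rewrite !Rminus_diag, Rmult_0_l, Rminus_0_r, Rabs_R0. lra. }
  apply (le_of_le_plus_eps _ _ (4 + (z - y) + 2 * Rabs (G x0)));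
    [pose proof (Rabs_pos (G x0)); lra|].
  intros eta Heta.
  destruct HF as [HFc HFlim]. destruct HG as [_ HGlim].
  destruct (HFlim eta Heta) as [K1 HK1]. destruct (HGlim eta Heta) as [K2 HK2].
  destruct (proj1 (continuous_eps_delta F y) (HFc y) eta Heta) as [dy [Hdy Hcy]].
  destruct (proj1 (continuous_eps_delta F z) (HFc z) eta Heta) as [dz [Hdz Hcz]].
  destruct (inv_pow2_small (Rmin (Rmin dy dz) (Rmin ((z - y) / 2) eta))) as [K3 HK3].
  { repeat apply Rmin_pos; lra. }
  set (m := Nat.max K1 (Nat.max K2 K3)).
  specialize (HK3 m ltac:(lia)).
  pose proof (Rmin_l (Rmin dy dz) (Rmin ((z - y) / 2) eta)).
  pose proof (Rmin_r (Rmin dy dz) (Rmin ((z - y) / 2) eta)).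
  pose proof (Rmin_l dy dz); pose proof (Rmin_r dy dz).
  pose proof (Rmin_l ((z - y) / 2) eta); pose proof (Rmin_r ((z - y) / 2) eta).
  destruct (dyadic_between y z m ltac:(lra) ltac:(lra)) as [A [N [HA HB]]].
  pose proof (dyadic_increment eta m A N (HK1 m ltac:(lia)) (HK2 m ltac:(lia))
                ltac:(lra) ltac:(lra))
    as Hinc.
  set (a := IZR A / 2 ^ m) in *. set (b := IZR (A + Z.of_nat N) / 2 ^ m) in *.
  assert (Hba : INR N / 2 ^ m = b - a).
  { unfold a, b. rewrite plus_IZR, <- INR_IZR_INZ. field. apply pow_nonzero. lra. }
  rewrite Hba in Hinc.
  assert (Hfa : Rabs (F a - F y) < eta) by (apply Hcy; apply Rabs_def1; lra).
  assert (Hfb : Rabs (F b - F z) < eta) by (apply Hcz; apply Rabs_def1; lra).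
  assert (Hw : Rabs ((z - y) - (b - a)) <= 2 * eta) by (apply Rabs_le; lra).
  replace (F z - F y - (z - y) * G x0) with
    ((F b - F a - (b - a) * G x0) - (F b - F z) + (F a - F y) - ((z - y) - (b - a)) * G x0) by ring.
  eapply Rle_trans; [apply Rabs_triang|]. rewrite Rabs_Ropp, Rabs_mult.
  eapply Rle_trans; [apply Rplus_le_compat_l, Rmult_le_compat_r; [apply Rabs_pos|exact Hw]|].
  eapply Rle_trans; [apply Rplus_le_compat_r, Rabs_triang|].
  eapply Rle_trans; [apply Rplus_le_compat_r, Rplus_le_compat_r, Rabs_triang|].
  rewrite Rabs_Ropp. assert (eps * (b - a) <= eps * (z - y)) by (apply Rmult_le_compat_l; lra).
  assert (eta * (b - a) <= eta * (z - y)) by (apply Rmult_le_compat_l; lra).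
  lra.
Qed.

End Derivative.

Lemma limit_is_derive f0 F G x0 :
  is_limit_function S f0 F -> is_limit_function T (fdiff f0) G -> is_derive F x0 (G x0).
Proof.
  intros HF HG. apply is_derive_Reals. intros eps He.
  destruct (proj1 (continuous_eps_delta G x0) (proj1 HG x0) (eps / 2) ltac:(lra))
    as [del [Hdel Hc]].
  assert (Hnear : forall t, Rabs (t - x0) < del -> Rabs (G t - G x0) <= eps / 2)
    by (intros; left; auto).
  exists (mkposreal del Hdel); simpl. intros h Hh0 Hh. apply Rabs_def2 in Hh.
  assert (Hquot : forall X w, 0 < w -> Rabs X <= eps / 2 * w -> Rabs (X / w) < eps).
  { intros X w Hw HX. rewrite Rabs_div, (Rabs_pos_eq w) by lra.
    apply Rmult_lt_reg_r with w; [lra|]. unfold Rdiv. rewrite Rmult_assoc, Rinv_l by lra. nra. }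
  destruct (Rlt_or_le 0 h) as [Hp|Hn].
  - pose proof (increment_estimate f0 F G HF HG x0 (eps / 2) del Hnear x0 (x0 + h)
                  ltac:(lra) ltac:(lra) ltac:(lra) ltac:(lra)).
    replace ((F (x0 + h) - F x0) / h - G x0) with ((F (x0 + h) - F x0 - (x0 + h - x0) * G x0) / h)
      by (field; lra).
    apply Hquot; [lra|]. replace (x0 + h - x0) with h in * by ring. lra.
  - pose proof (increment_estimate f0 F G HF HG x0 (eps / 2) del Hnear (x0 + h) x0
                  ltac:(lra) ltac:(lra) ltac:(lra) ltac:(lra)).
    replace ((F (x0 + h) - F x0) / h - G x0)
      with ((F x0 - F (x0 + h) - (x0 - (x0 + h)) * G x0) / (- h))
      by (field; lra).
    apply Hquot; [lra|]. replace (x0 - (x0 + h)) with (- h) in * by ring. lra.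
Qed.

Lemma limit_C1 f0 F G :
  is_limit_function S f0 F -> is_limit_function T (fdiff f0) G -> C1_function F.
Proof.
  intros HF HG x. split; [exists (G x); now apply (limit_is_derive f0)|].
  apply (continuous_ext G); [|apply HG].
  intros t. symmetry. apply is_derive_unique. now apply (limit_is_derive f0).
Qed.

End DerivedScheme.

Theorem derived_scheme_C1 (S T : zseq -> zseq) C' C D0 mu :
  0 <= C' -> 0 <= C -> 0 <= D0 -> 0 < mu < 1 ->
  (forall f d, diff_le f d -> forall i, Rabs (S f i - f (i / 2)%Z) <= C' * d) ->
  (forall f k, fdiff (S f) k = / 2 * T (fdiff f) k) ->
  (forall h c k, T (fun l => c * h l) k = c * T h k) ->
  (forall h M, (forall l, Rabs (h l) <= M) -> forall k, Rabs (T h k) <= M) ->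
  (forall g d, diff_le g d -> forall i, Rabs (T g i - g (i / 2)%Z) <= C * d) ->
  (forall g d, diff_le g d -> forall k, diff_le (Nat.iter k T g) (D0 * mu ^ k * d)) ->
  C1_scheme S.
Proof.
  intros HC' HC HD0 Hmu S_step S_fdiff T_scal T_sup T_step T_contract.
  split; [exact (S_uniformly_convergent S T C' HC' S_step S_fdiff T_scal T_sup)|].
  intros f0 F Hf0 HF. destruct (diff_le_of_bounded f0 Hf0) as [d Hd].
  destruct (contractive_scheme_converges T C D0 mu HC HD0 Hmu T_step T_contract
              (fdiff f0) (2 * d) (diff_le_fdiff f0 d Hd)) as [G HG].
  exact (limit_C1 S T S_fdiff T_scal f0 F G HF HG).
Qed.

Definition osc_le (N : Z) (h : zseq) (d : R) : Prop :=
  forall l l', (Z.abs (l - l') <= N)%Z -> Rabs (h l - h l') <= d.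

Lemma osc_le_of_diff_le N h d : (0 <= N)%Z -> diff_le h d -> osc_le N h (IZR N * d).
Proof.
  intros HN H l l' Hl. eapply Rle_trans; [now apply diff_le_dist|].
  apply Rmult_le_compat_r; [exact (diff_le_nonneg h d H)|]. now apply IZR_le.
Qed.

Lemma diff_le_of_osc_le N h d : (1 <= N)%Z -> osc_le N h d -> diff_le h d.
Proof. intros HN H j. apply H. lia. Qed.

Lemma Zmod2_cases k : (k mod 2 = 0 \/ k mod 2 = 1)%Z.
Proof. Z.div_mod_to_equations; lia. Qed.

Lemma pow_div2_le mu k : 0 < mu <= 1 -> (mu ^ 2) ^ Nat.div2 k <= mu ^ k / mu.
Proof.
  intros Hmu. rewrite <- pow_mult.
  assert (Hk : mu ^ k = mu ^ (2 * Nat.div2 k) * mu ^ Nat.b2n (Nat.odd k))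
    by (rewrite <- pow_add, <- Nat.div2_odd; reflexivity).
  rewrite Hk. assert (0 <= mu ^ (2 * Nat.div2 k)) by (apply pow_le; lra).
  destruct (Nat.odd k); unfold Nat.b2n; [rewrite pow_1|rewrite pow_O].
  - right. field. lra.
  - assert (1 <= / mu) by (rewrite <- Rinv_1; apply Rinv_le_contravar; lra).
    unfold Rdiv. rewrite Rmult_1_r. nra.
Qed.

Definition window_rate theta := sqrt (1 - theta ^ 4).

Lemma window_rate_bounds theta : 0 < theta < 1 -> 0 < window_rate theta < 1.
Proof.
  intros Htheta. assert (0 < theta ^ 4 < 1).
  { split; [apply pow_lt; lra|]. apply pow_lt_1_compat; [lra|lia]. }
  unfold window_rate. split; [apply sqrt_lt_R0; lra|].
  rewrite <- sqrt_1 at 2. apply sqrt_lt_1_alt. lra.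
Qed.

Section WindowScheme.
Variable n : nat.
Variable tau : Z -> nat -> R.
Hypothesis tau_convex : forall i, (i = 0 \/ i = 1)%Z -> convex_weights (2 * n - 1) (tau i).

Definition window_scheme (h : zseq) : zseq := fun k =>
  ssum (2 * n - 1) (fun t => tau (k mod 2)%Z t * h (k / 2 - Z.of_nat n + 1 + Z.of_nat t)%Z).

Let Tw := window_scheme.
Let W := (4 * Z.of_nat n)%Z.

Let mask_convex k : convex_weights (2 * n - 1) (tau (k mod 2)%Z).
Proof. apply tau_convex, Zmod2_cases. Qed.

Lemma window_scal h c k : Tw (fun l => c * h l) k = c * Tw h k.
Proof. unfold Tw, window_scheme. rewrite <- ssum_scal. apply ssum_ext. intros; ring. Qed.

Lemma window_sup h M : (forall l, Rabs (h l) <= M) -> forall k, Rabs (Tw h k) <= M.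
Proof. intros H k. apply (convex_abs_bound _ _ (mask_convex k)). auto. Qed.

Lemma window_step g d : diff_le g d -> forall i, Rabs (Tw g i - g (i / 2)%Z) <= INR n * d.
Proof.
  intros H i. unfold Tw, window_scheme. rewrite convex_sub by apply mask_convex.
  apply (convex_abs_bound _ _ (mask_convex i)). intros t Ht.
  eapply Rle_trans; [now apply diff_le_dist|].
  apply Rmult_le_compat_r; [exact (diff_le_nonneg g d H)|].
  rewrite INR_IZR_INZ. apply IZR_le. lia.
Qed.

Lemma osc_window h d : osc_le W h d -> osc_le W (Tw h) d.
Proof.
  intros H k k' Hk. apply convex_pair; try apply mask_convex.
  intros t s Ht Hs. apply H. unfold W in *. Z.div_mod_to_equations. lia.
Qed.

Hypothesis Hn : (2 <= n)%nat.
Variable theta : R.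
Hypothesis Htheta : 0 < theta < 1.
Hypothesis tau_ge : forall i t, (i = 0 \/ i = 1)%Z -> (t < 2 * n - 1)%nat -> theta <= tau i t.

Let mask_ge k t : (t < 2 * n - 1)%nat -> theta <= tau (k mod 2)%Z t.
Proof. apply tau_ge, Zmod2_cases. Qed.

(* The last point of the window of [k] and the first point of the window of [k'] share a
   point of their own windows, which receives weight at least [theta ^ 2] from each side. *)
Lemma osc_window2_le h d k k' : osc_le W h d -> (k <= k' <= k + W)%Z ->
  Rabs (Tw (Tw h) k - Tw (Tw h) k') <= (1 - theta ^ 4) * d.
Proof.
  intros H Hk. unfold Tw at 1 3, window_scheme.
  set (m := fun (k : Z) (t : nat) => (k / 2 - Z.of_nat n + 1 + Z.of_nat t)%Z).
  set (v := Z.to_nat (m k (2 * n - 2)%nat / 2 - m k' 0%nat / 2 + Z.of_nat n - 1)).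
  assert (Hrange : (0 <= m k (2 * n - 2)%nat / 2 - m k' 0%nat / 2 + Z.of_nat n - 1
                       <= 2 * Z.of_nat n - 2)%Z).
  { unfold m, W in *. rewrite Nat2Z.inj_sub by lia. simpl Z.of_nat.
    Z.div_mod_to_equations. lia. }
  assert (Hv : (Z.of_nat v = m k (2 * n - 2)%nat / 2 - m k' 0%nat / 2 + Z.of_nat n - 1)%Z
               /\ (v < 2 * n - 1)%nat) by (unfold v; split; [rewrite Z2Nat.id|]; lia).
  assert (Hd : 0 <= d) by (specialize (H 0%Z 0%Z ltac:(unfold W; lia));
                           rewrite Rminus_diag, Rabs_R0 in H; exact H).
  assert (Hwin : forall t s, (t < 2 * n - 1)%nat -> (s < 2 * n - 1)%nat ->
            Rabs (Tw h (m k t) - Tw h (m k' s)) <= d).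
  { intros t s Ht Hs. apply convex_pair; try apply mask_convex.
    intros u w Hu Hw. apply H. unfold m, W in *. Z.div_mod_to_equations. lia. }
  eapply Rle_trans.
  - apply (convex_pair_gap _ _ _ _ _ _ d (2 * n - 2)%nat 0%nat); try apply mask_convex; try lia.
    + exact Hwin.
    + apply (convex_pair_gap _ _ _ _ _ _ d (n - 1)%nat v d); try apply mask_convex; try lia.
      * intros u w Hu Hw. apply H. unfold m, W in *. Z.div_mod_to_equations. lia.
      * assert (Hshared : m (m k (2 * n - 2)%nat) (n - 1)%nat = m (m k' 0%nat) v)
          by (unfold m at 1 3; rewrite (proj1 Hv); unfold m;
              rewrite !Nat2Z.inj_sub by lia; simpl Z.of_nat; ring).
        unfold m in Hshared. rewrite Hshared, Rminus_diag, Rabs_R0. lra.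
  - match goal with |- d - ?a1 * (?a2 * (?a3 * (?a4 * d))) <= _ =>
      assert (Hprod : theta ^ 4 <= a1 * (a2 * (a3 * a4))) end.
    { replace (theta ^ 4) with (theta * (theta * (theta * theta))) by ring.
      repeat (apply Rmult_le_compat;
              [lra|left; repeat apply Rmult_lt_0_compat; lra|apply mask_ge; lia|]).
      apply mask_ge. lia. }
    nra.
Qed.

Let rho := 1 - theta ^ 4.

Lemma osc_window2 h d : osc_le W h d -> osc_le W (Tw (Tw h)) (rho * d).
Proof.
  intros H k k' Hk. destruct (Z.le_gt_cases k k').
  - apply osc_window2_le; auto. lia.
  - rewrite Rabs_minus_sym. apply osc_window2_le; auto. lia.
Qed.

Lemma osc_window_iter h d : osc_le W h d ->
  forall k, osc_le W (Nat.iter k Tw h) (rho ^ Nat.div2 k * d).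
Proof.
  intros H.
  assert (Hpair : forall k, osc_le W (Nat.iter k Tw h) (rho ^ Nat.div2 k * d)
                        /\ osc_le W (Nat.iter (S k) Tw h) (rho ^ Nat.div2 (S k) * d)).
  { induction k as [|k [IHk IHSk]].
    - simpl. rewrite Rmult_1_l. split; [exact H|now apply osc_window].
    - split; [exact IHSk|]. change (Nat.div2 (S (S k))) with (S (Nat.div2 k)).
      simpl pow. rewrite Rmult_assoc. now apply osc_window2. }
  intros k. apply Hpair.
Qed.

Lemma window_contract g d : diff_le g d ->
  forall k, diff_le (Nat.iter k Tw g) (IZR W / window_rate theta * window_rate theta ^ k * d).
Proof.
  intros H k. pose proof (diff_le_nonneg g d H). pose proof (window_rate_bounds theta Htheta).
  assert (HW : (1 <= W)%Z) by (unfold W; lia).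
  assert (Hrho : rho = window_rate theta ^ 2).
  { unfold window_rate. rewrite <- Rsqr_pow2, Rsqr_sqrt; [reflexivity|].
    unfold rho. pose proof (pow_lt_1_compat theta 4 ltac:(lra) ltac:(lia)). lra. }
  apply (diff_le_of_osc_le W); [exact HW|].
  pose proof (osc_window_iter g _ (osc_le_of_diff_le W g d ltac:(lia) H) k) as Hosc.
  intros l l' Hl. eapply Rle_trans; [now apply Hosc|].
  replace (IZR W / window_rate theta * window_rate theta ^ k * d)
    with (window_rate theta ^ k / window_rate theta * (IZR W * d)) by (field; lra).
  rewrite Hrho. apply Rmult_le_compat_r.
  - apply Rmult_le_pos; [apply IZR_le; lia|lra].
  - apply pow_div2_le. lra.
Qed.

End WindowScheme.

Lemma ssum_by_parts_balanced P c (f : zseq) L : ssum (S P) c = 0 ->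
  ssum (S P) (fun t => c t * f (L + Z.of_nat t)%Z)
  = - ssum P (fun t => ssum (S t) c * fdiff f (L + Z.of_nat t)%Z).
Proof. intros H0. rewrite ssum_by_parts, H0. ring. Qed.

Lemma sumZ_filter P l h : sumZ (filter P l) h = sumZ l (fun m => if P m then h m else 0).
Proof. induction l as [|a l IH]; simpl; [reflexivity|]. destruct (P a); simpl; rewrite IH; lra. Qed.

Lemma sumZ_map_seq g s c h : sumZ (map g (seq s c)) h = ssum c (fun k => h (g (s + k)%nat)).
Proof.
  revert s. induction c as [|c IH]; intros s; [reflexivity|].
  simpl seq; simpl map. unfold sumZ in *. simpl fold_right.
  rewrite IH, ssum_Sl, Nat.add_0_r. f_equal. apply ssum_ext. intros. do 2 f_equal. lia.
Qed.

Section Stencil.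
Variables (n : nat) (lam : R).
Hypothesis Hn : (1 <= n)%nat.
Hypothesis Hlam : 2 * INR n - 1 < lam < 2 * INR n.

Lemma up_lambda : up lam = (2 * Z.of_nat n)%Z.
Proof. symmetry. apply tech_up; rewrite mult_IZR, <- INR_IZR_INZ; simpl; lra. Qed.

Lemma abs_lt_lambda m : Rabs (IZR m) < lam <-> (Z.abs m <= 2 * Z.of_nat n - 1)%Z.
Proof.
  rewrite Rabs_Zabs. split; intros H.
  - assert (Hlt : IZR (Z.abs m) < IZR (2 * Z.of_nat n))
      by (rewrite mult_IZR, <- INR_IZR_INZ; simpl; lra).
    apply lt_IZR in Hlt. lia.
  - apply IZR_le in H. rewrite minus_IZR, mult_IZR, <- INR_IZR_INZ in H. simpl in H. lra.
Qed.

Let in_stencil i m : bool :=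
  ((m mod 2 =? i)%Z && (if Rlt_dec (Rabs (IZR m)) lam then true else false))%bool.

Lemma sumZ_Mset i h : sumZ (Mset lam i) h =
  ssum (4 * n + 1) (fun K => if in_stencil i (Z.of_nat K - 2 * Z.of_nat n)%Z
                             then h (Z.of_nat K - 2 * Z.of_nat n)%Z else 0).
Proof.
  unfold Mset. rewrite sumZ_filter. unfold zrange. rewrite sumZ_map_seq, up_lambda.
  replace (Z.to_nat (2 * (2 * Z.of_nat n) + 1)) with (4 * n + 1)%nat by lia. reflexivity.
Qed.

Lemma in_stencil_spec i m : (i = 0 \/ i = 1)%Z ->
  in_stencil i m = true <-> (m mod 2 = i /\ Z.abs m <= 2 * Z.of_nat n - 1)%Z.
Proof.
  intros Hi. unfold in_stencil. rewrite andb_true_iff, Z.eqb_eq, <- abs_lt_lambda.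
  destruct (Rlt_dec _ _); intuition discriminate.
Qed.

Lemma in_stencil_false i m : (i = 0 \/ i = 1)%Z ->
  ~ (m mod 2 = i /\ Z.abs m <= 2 * Z.of_nat n - 1)%Z -> in_stencil i m = false.
Proof.
  intros Hi H. destruct (in_stencil i m) eqn:E; [|reflexivity]. now apply in_stencil_spec in E.
Qed.

(* The stencil runs over [m = K - 2 n] with [0 <= K <= 4 n]; [K = 0] and [K = 4 n] fall outside. *)
Lemma sumZ_Mset_pairs i h : (i = 0 \/ i = 1)%Z -> sumZ (Mset lam i) h =
  ssum (2 * n) (fun t =>
    (if in_stencil i (2 * Z.of_nat t + 1 - 2 * Z.of_nat n)%Z
     then h (2 * Z.of_nat t + 1 - 2 * Z.of_nat n)%Z else 0)
  + (if in_stencil i (2 * Z.of_nat t + 2 - 2 * Z.of_nat n)%Z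
     then h (2 * Z.of_nat t + 2 - 2 * Z.of_nat n)%Z else 0)).
Proof.
  intros Hi. rewrite sumZ_Mset. replace (4 * n + 1)%nat with (S (2 * (2 * n))) by lia.
  rewrite ssum_Sl, ssum_double, in_stencil_false by (auto; lia). rewrite Rplus_0_l.
  apply ssum_ext. intros t Ht.
  replace (Z.of_nat (S (2 * t)) - 2 * Z.of_nat n)%Z with (2 * Z.of_nat t + 1 - 2 * Z.of_nat n)%Z
    by lia.
  replace (Z.of_nat (S (2 * t + 1)) - 2 * Z.of_nat n)%Z with (2 * Z.of_nat t + 2 - 2 * Z.of_nat n)%Z
    by lia.
  reflexivity.
Qed.

Lemma sumZ_Mset_odd h :
  sumZ (Mset lam 1) h = ssum (2 * n) (fun t => h (2 * Z.of_nat t + 1 - 2 * Z.of_nat n)%Z).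
Proof.
  rewrite sumZ_Mset_pairs by auto. apply ssum_ext. intros t Ht.
  rewrite (in_stencil_false 1 (2 * Z.of_nat t + 2 - 2 * Z.of_nat n))
    by (auto; Z.div_mod_to_equations; lia).
  replace (in_stencil 1 _) with true; [lra|].
  symmetry. apply in_stencil_spec; [auto|]. split; [Z.div_mod_to_equations|]; lia.
Qed.

Lemma sumZ_Mset_even h :
  sumZ (Mset lam 0) h = ssum (2 * n - 1) (fun t => h (2 * Z.of_nat t + 2 - 2 * Z.of_nat n)%Z).
Proof.
  rewrite sumZ_Mset_pairs by auto. replace (2 * n)%nat with (S (2 * n - 1)) at 1 by lia.
  rewrite ssum_S, !(in_stencil_false 0 (_ + _ - _)) by (auto; Z.div_mod_to_equations; lia).
  rewrite Rplus_0_l, Rplus_0_r. apply ssum_ext. intros t Ht.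
  rewrite (in_stencil_false 0 (2 * Z.of_nat t + 1 - 2 * Z.of_nat n))
    by (auto; Z.div_mod_to_equations; lia).
  replace (in_stencil 0 _) with true; [lra|].
  symmetry. apply in_stencil_spec; [auto|]. split; [Z.div_mod_to_equations|]; lia.
Qed.

End Stencil.

Lemma finite_pos_lower_bound N F : (forall t, (t < N)%nat -> 0 < F t) ->
  exists th, 0 < th /\ forall t, (t < N)%nat -> th <= F t.
Proof.
  induction N as [|N IH]; intros H; [exists 1; split; [lra|intros; lia]|].
  destruct IH as [th [Hth Hle]]; [intros; apply H; lia|].
  exists (Rmin th (F N)). split; [apply Rmin_pos; auto; apply H; lia|].
  intros t Ht. destruct (Nat.eq_dec t N) as [->|Hne]; [apply Rmin_r|].
  eapply Rle_trans; [apply Rmin_l|]. apply Hle. lia.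
Qed.

Section Masks.
Variables (phi : R -> R) (lam : R) (n : nat).
Hypothesis Hn : (2 <= n)%nat.
Hypothesis Hlam : 2 * INR n - 1 < lam < 2 * INR n.

(* [tap K] is the weight [w_m] with [m = K - (2 n - 1)], so [0 <= K <= 4 n - 2] covers
   [|m| < lambda].  Even outputs use the odd [K], odd outputs the even [K]. *)
Definition tap (K : nat) : R := wgt phi lam (Z.of_nat K - (2 * Z.of_nat n - 1)).

Hypothesis tap_pos : forall K, (K <= 4 * n - 2)%nat -> 0 < tap K.

Lemma tap_sym K : (K <= 4 * n - 2)%nat -> tap K = tap (4 * n - 2 - K).
Proof.
  intros H. unfold tap, wgt. do 2 f_equal.
  replace (Z.of_nat (4 * n - 2 - K) - (2 * Z.of_nat n - 1))%Z
    with (- (Z.of_nat K - (2 * Z.of_nat n - 1)))%Z by lia.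
  now rewrite opp_IZR, Rabs_Ropp.
Qed.

Definition even_mass := ssum (2 * n - 1) (fun t => tap (2 * t + 1)).
Definition odd_mass := ssum (2 * n) (fun t => tap (2 * t)).

Lemma even_mass_pos : 0 < even_mass.
Proof. apply ssum_pos; [lia|]. intros; apply tap_pos; lia. Qed.

Lemma odd_mass_pos : 0 < odd_mass.
Proof. apply ssum_pos; [lia|]. intros; apply tap_pos; lia. Qed.

Definition even_mask t := tap (2 * t + 1) / even_mass.
Definition odd_mask t := tap (2 * t) / odd_mass.

(* The even mask has [2 n - 1] entries; a zero pads it to the length [2 n] of the odd mask. *)
Definition even_mask_padded t := if (t <? 2 * n - 1)%nat then even_mask t else 0.
Definition mask (i : Z) := if (i =? 0)%Z then even_mask_padded else odd_mask.

Definition mask_scheme (f : zseq) : zseq := fun k =>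
  ssum (2 * n) (fun t => mask (k mod 2)%Z t * f (k / 2 - Z.of_nat n + 1 + Z.of_nat t)%Z).

Lemma ssum_even_mask_padded g : ssum (2 * n) (fun t => even_mask_padded t * g t)
  = ssum (2 * n - 1) (fun t => even_mask t * g t).
Proof.
  replace (2 * n)%nat with (S (2 * n - 1)) at 1 by lia.
  rewrite ssum_S. unfold even_mask_padded at 2.
  rewrite (proj2 (Nat.ltb_ge _ _)), Rmult_0_l, Rplus_0_r by lia.
  apply ssum_ext. intros t Ht. unfold even_mask_padded. now rewrite (proj2 (Nat.ltb_lt _ _)).
Qed.

Lemma sum_even_mask : ssum (2 * n - 1) even_mask = 1.
Proof. unfold even_mask. rewrite ssum_div. apply Rdiv_diag. pose proof even_mass_pos. lra. Qed.

Lemma sum_odd_mask : ssum (2 * n) odd_mask = 1.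
Proof. unfold odd_mask. rewrite ssum_div. apply Rdiv_diag. pose proof odd_mass_pos. lra. Qed.

Lemma sum_even_mask_padded : ssum (2 * n) even_mask_padded = 1.
Proof.
  transitivity (ssum (2 * n) (fun t => even_mask_padded t * 1)); [apply ssum_ext; intros; ring|].
  rewrite ssum_even_mask_padded, <- sum_even_mask at 1. apply ssum_ext. intros; ring.
Qed.

Lemma mask_convex i : (i = 0 \/ i = 1)%Z -> convex_weights (2 * n) (mask i).
Proof.
  pose proof even_mass_pos; pose proof odd_mass_pos.
  intros [-> | ->]; unfold mask; simpl; split.
  - intros t Ht. unfold even_mask_padded, even_mask. destruct (Nat.ltb_spec t (2 * n - 1)); [|lra].
    left. apply Rdiv_lt_0_compat; [apply tap_pos; lia|lra].
  - exact sum_even_mask_padded.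
  - intros t Ht. unfold odd_mask. left. apply Rdiv_lt_0_compat; [apply tap_pos; lia|lra].
  - exact sum_odd_mask.
Qed.

Lemma S1_eq_mask_scheme f k : S1 phi lam f k = mask_scheme f k.
Proof.
  unfold S1, mask_scheme, mask. cbv zeta. destruct (Zmod2_cases k) as [E|E]; rewrite E.
  - change (0 =? 0)%Z with true; cbv beta iota.
    rewrite ssum_even_mask_padded, !(sumZ_Mset_even n lam ltac:(lia) Hlam).
    replace (ssum (2 * n - 1) (fun t => wgt phi lam (2 * Z.of_nat t + 2 - 2 * Z.of_nat n)))
      with even_mass by (apply ssum_ext; intros; unfold tap; f_equal; lia).
    rewrite <- ssum_div.
    apply ssum_ext. intros t Ht. unfold even_mask, tap.
    replace (k / 2 + (2 * Z.of_nat t + 2 - 2 * Z.of_nat n + 0) / 2)%Z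
      with (k / 2 - Z.of_nat n + 1 + Z.of_nat t)%Z by (Z.div_mod_to_equations; lia).
    replace (Z.of_nat (2 * t + 1) - (2 * Z.of_nat n - 1))%Z
      with (2 * Z.of_nat t + 2 - 2 * Z.of_nat n)%Z by lia.
    unfold Rdiv. ring.
  - change (1 =? 0)%Z with false; cbv beta iota.
    rewrite !(sumZ_Mset_odd n lam ltac:(lia) Hlam).
    replace (ssum (2 * n) (fun t => wgt phi lam (2 * Z.of_nat t + 1 - 2 * Z.of_nat n)))
      with odd_mass by (apply ssum_ext; intros; unfold tap; f_equal; lia).
    rewrite <- ssum_div.
    apply ssum_ext. intros t Ht. unfold odd_mask, tap.
    replace (k / 2 + (2 * Z.of_nat t + 1 - 2 * Z.of_nat n + 1) / 2)%Z
      with (k / 2 - Z.of_nat n + 1 + Z.of_nat t)%Z by (Z.div_mod_to_equations; lia).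
    replace (Z.of_nat (2 * t) - (2 * Z.of_nat n - 1))%Z
      with (2 * Z.of_nat t + 1 - 2 * Z.of_nat n)%Z by lia.
    unfold Rdiv. ring.
Qed.

(* The masks of the derived scheme, read off by summation by parts. *)
Definition diff_mask (i : Z) (t : nat) : R :=
  if (i =? 0)%Z then 2 * (ssum (S t) even_mask - ssum (S t) odd_mask)
  else 2 * (ssum (S t) odd_mask - ssum t even_mask).

Lemma mask_scheme_fdiff_even f k : (k mod 2 = 0)%Z ->
  fdiff (mask_scheme f) k = / 2 * window_scheme n diff_mask (fdiff f) k.
Proof.
  intros E. unfold fdiff at 1, mask_scheme, window_scheme, mask.
  replace ((k + 1) mod 2)%Z with 1%Z by (Z.div_mod_to_equations; lia).
  replace ((k + 1) / 2)%Z with (k / 2)%Z by (Z.div_mod_to_equations; lia).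
  rewrite E. change (1 =? 0)%Z with false; change (0 =? 0)%Z with true; cbv beta iota.
  set (L := (k / 2 - Z.of_nat n + 1)%Z).
  rewrite <- ssum_minus.
  rewrite (ssum_ext _ _ (fun t => (odd_mask t - even_mask_padded t) * f (L + Z.of_nat t)%Z))
    by (intros; ring).
  replace (2 * n)%nat with (S (2 * n - 1)) at 1 by lia.
  rewrite ssum_by_parts_balanced.
  2:{ rewrite ssum_minus. replace (S (2 * n - 1)) with (2 * n)%nat by lia.
      rewrite sum_odd_mask, sum_even_mask_padded. ring. }
  rewrite <- ssum_scal, <- ssum_opp. apply ssum_ext. intros t Ht.
  rewrite ssum_minus, (ssum_ext (S t) even_mask_padded even_mask).
  - unfold diff_mask. change (0 =? 0)%Z with true; cbv iota. field.
  - intros u Hu. unfold even_mask_padded. now rewrite (proj2 (Nat.ltb_lt _ _)) by lia.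
Qed.

Lemma mask_scheme_fdiff_odd f k : (k mod 2 = 1)%Z ->
  fdiff (mask_scheme f) k = / 2 * window_scheme n diff_mask (fdiff f) k.
Proof.
  intros E. unfold fdiff at 1, mask_scheme, window_scheme, mask.
  replace ((k + 1) mod 2)%Z with 0%Z by (Z.div_mod_to_equations; lia).
  replace ((k + 1) / 2)%Z with (k / 2 + 1)%Z by (Z.div_mod_to_equations; lia).
  rewrite E. change (1 =? 0)%Z with false; change (0 =? 0)%Z with true; cbv beta iota.
  set (L := (k / 2 - Z.of_nat n + 1)%Z).
  set (shifted := fun t => match t with O => 0 | S u => even_mask u end).
  assert (Hshift :
    ssum (2 * n) (fun t => even_mask_padded t * f (k / 2 + 1 - Z.of_nat n + 1 + Z.of_nat t)%Z)
    = ssum (2 * n) (fun t => shifted t * f (L + Z.of_nat t)%Z)).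
  { rewrite ssum_even_mask_padded. replace (2 * n)%nat with (S (2 * n - 1)) at 2 by lia.
    rewrite ssum_Sl. simpl shifted. rewrite Rmult_0_l, Rplus_0_l.
    apply ssum_ext. intros t Ht. do 2 f_equal. unfold L. lia. }
  rewrite Hshift, <- ssum_minus.
  rewrite (ssum_ext _ _ (fun t => (shifted t - odd_mask t) * f (L + Z.of_nat t)%Z))
    by (intros; ring).
  replace (2 * n)%nat with (S (2 * n - 1)) at 1 by lia.
  rewrite ssum_by_parts_balanced.
  2:{ rewrite ssum_minus, ssum_Sl. replace (S (2 * n - 1)) with (2 * n)%nat by lia.
      change (shifted 0%nat) with 0. change (fun t => shifted (S t)) with even_mask.
      rewrite sum_even_mask, sum_odd_mask. ring. }
  rewrite <- ssum_scal, <- ssum_opp. apply ssum_ext. intros t Ht.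
  rewrite ssum_minus, ssum_Sl. unfold diff_mask. change (1 =? 0)%Z with false; cbv iota.
  change (shifted 0%nat) with 0. change (fun u => shifted (S u)) with even_mask. field.
Qed.

Lemma mask_scheme_fdiff f k :
  fdiff (mask_scheme f) k = / 2 * window_scheme n diff_mask (fdiff f) k.
Proof.
  destruct (Zmod2_cases k) as [E|E];
    [apply mask_scheme_fdiff_even|apply mask_scheme_fdiff_odd]; exact E.
Qed.

Lemma even_mask_sym t : (t < 2 * n - 1)%nat -> even_mask t = even_mask (2 * n - 1 - 1 - t).
Proof. intros H. unfold even_mask. f_equal. rewrite tap_sym by lia. f_equal. lia. Qed.

Lemma odd_mask_sym t : (t < 2 * n)%nat -> odd_mask t = odd_mask (2 * n - 1 - t).
Proof. intros H. unfold odd_mask. f_equal. rewrite tap_sym by lia. f_equal. lia. Qed.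

Lemma mask_scheme_linear k : mask_scheme (fun l => IZR l) k = IZR k / 2.
Proof.
  assert (Haffine : forall N c a, ssum N (fun t => c t * IZR (a + Z.of_nat t))
                                  = IZR a * ssum N c + ssum N (fun t => INR t * c t)).
  { intros N c a. rewrite <- ssum_scal, <- ssum_plus. apply ssum_ext. intros t _.
    rewrite plus_IZR, <- INR_IZR_INZ. ring. }
  unfold mask_scheme, mask. destruct (Zmod2_cases k) as [E|E]; rewrite E.
  - change (0 =? 0)%Z with true; cbv beta iota.
    rewrite ssum_even_mask_padded, Haffine, ssum_first_moment by apply even_mask_sym.
    rewrite sum_even_mask, minus_INR, mult_INR by lia.
    replace (IZR k) with (2 * IZR (k / 2))
      by (rewrite <- mult_IZR; f_equal; Z.div_mod_to_equations; lia).
    rewrite plus_IZR, minus_IZR, <- INR_IZR_INZ. simpl. field.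
  - change (1 =? 0)%Z with false; cbv beta iota.
    rewrite Haffine, ssum_first_moment by apply odd_mask_sym.
    rewrite sum_odd_mask, mult_INR.
    replace (IZR k) with (2 * IZR (k / 2) + 1)
      by (rewrite <- mult_IZR, <- plus_IZR; f_equal; Z.div_mod_to_equations; lia).
    rewrite plus_IZR, minus_IZR, <- INR_IZR_INZ. simpl. field.
Qed.

(* Differencing the linear sequence [l |-> l], which the scheme reproduces, gives total mass 1. *)
Lemma diff_mask_sum i : (i = 0 \/ i = 1)%Z -> ssum (2 * n - 1) (diff_mask i) = 1.
Proof.
  intros Hi. pose proof (mask_scheme_fdiff (fun l => IZR l) i) as H.
  unfold fdiff at 1 in H. rewrite !mask_scheme_linear, plus_IZR in H.
  unfold window_scheme in H.
  rewrite (ssum_ext _ _ (diff_mask (i mod 2))) in H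
    by (intros; unfold fdiff; rewrite plus_IZR; ring).
  replace (i mod 2)%Z with i in H by (destruct Hi as [-> | ->]; reflexivity). lra.
Qed.

Hypothesis tap_logconcave : forall k, (1 <= k)%nat -> (k + 1 <= 4 * n - 2)%nat ->
  tap (k - 1) * tap (k + 1) <= tap k * tap k.

Lemma tap_ratio_antitone d i : (i + 1 + d <= 4 * n - 2)%nat ->
  tap (i + 1 + d) / tap (i + d) <= tap (i + 1) / tap i.
Proof.
  induction d; intros H; [rewrite !Nat.add_0_r; lra|].
  eapply Rle_trans; [|apply IHd; lia].
  pose proof (tap_logconcave (i + 1 + d) ltac:(lia) ltac:(lia)) as Hlc.
  replace (i + 1 + d - 1)%nat with (i + d)%nat in Hlc by lia.
  replace (i + 1 + d + 1)%nat with (i + 1 + S d)%nat in Hlc by lia.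
  replace (i + S d)%nat with (i + 1 + d)%nat by lia.
  assert (0 < tap (i + d)) by (apply tap_pos; lia).
  assert (0 < tap (i + 1 + d)) by (apply tap_pos; lia).
  apply Rmult_le_reg_r with (tap (i + 1 + d) * tap (i + d)); [nra|].
  field_simplify; nra.
Qed.

Lemma tap_cross_le i j : (i + 1 <= j - 1)%nat -> (j <= 4 * n - 2)%nat ->
  tap i * tap j <= tap (i + 1) * tap (j - 1).
Proof.
  intros Hij Hj. pose proof (tap_ratio_antitone (j - 1 - i) i ltac:(lia)) as H.
  replace (i + 1 + (j - 1 - i))%nat with j in H by lia.
  replace (i + (j - 1 - i))%nat with (j - 1)%nat in H by lia.
  assert (0 < tap i) by (apply tap_pos; lia). assert (0 < tap (j - 1)) by (apply tap_pos; lia).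
  apply Rmult_le_compat_r with (r := tap i * tap (j - 1)) in H; [|nra].
  replace (tap j / tap (j - 1) * (tap i * tap (j - 1))) with (tap i * tap j) in H by (field; lra).
  replace (tap (i + 1) / tap i * (tap i * tap (j - 1))) with (tap (i + 1) * tap (j - 1)) in H
    by (field; lra).
  exact H.
Qed.

(* Splitting both masses after the prefix, the claim reduces to [EL * OR <= OL * ER], a sum of
   instances of [tap_cross_le]; the last odd-output tap makes the inequality strict. *)
Lemma even_prefix_dominates t : (t < 2 * n - 1)%nat ->
  ssum (S t) (fun u => tap (2 * u)) * even_mass < ssum (S t) (fun u => tap (2 * u + 1)) * odd_mass.
Proof.
  intros Ht. set (r := (2 * n - 2 - t)%nat).
  set (OL := ssum (S t) (fun u => tap (2 * u + 1))). set (EL := ssum (S t) (fun u => tap (2 * u))).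
  set (ER := ssum r (fun b => tap (2 * (S t + b)))).
  set (OR := ssum r (fun b => tap (2 * (S t + b) + 1))).
  assert (Hodd : odd_mass = EL + ER + tap (4 * n - 2)).
  { unfold odd_mass, EL, ER. replace (2 * n)%nat with (S t + S r)%nat by lia.
    rewrite ssum_add, (ssum_S r). replace (2 * (S t + r))%nat with (4 * n - 2)%nat by lia. ring. }
  assert (Heven : even_mass = OL + OR).
  { unfold even_mass, OL, OR. replace (2 * n - 1)%nat with (S t + r)%nat by lia.
    now rewrite ssum_add. }
  assert (Hcross : EL * OR <= OL * ER).
  { unfold EL, OR, OL, ER. rewrite !ssum_mult.
    apply ssum_le. intros a Ha. apply ssum_le. intros b Hb.
    pose proof (tap_cross_le (2 * a) (2 * (S t + b) + 1) ltac:(lia) ltac:(lia)) as H.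
    now replace (2 * (S t + b) + 1 - 1)%nat with (2 * (S t + b))%nat in H by lia. }
  assert (0 < OL) by (apply ssum_pos; [lia|intros; apply tap_pos; lia]).
  assert (0 < tap (4 * n - 2)) by (apply tap_pos; lia).
  rewrite Hodd, Heven. nra.
Qed.

Lemma odd_prefix_dominates t : (t < 2 * n - 1)%nat ->
  ssum t (fun u => tap (2 * u + 1)) * odd_mass < ssum (S t) (fun u => tap (2 * u)) * even_mass.
Proof.
  intros Ht. set (r := (2 * n - 1 - t)%nat).
  set (OL := ssum t (fun u => tap (2 * u + 1))). set (EL := ssum (S t) (fun u => tap (2 * u))).
  set (ER := ssum r (fun b => tap (2 * (S t + b)))).
  set (OR := ssum r (fun b => tap (2 * (t + b) + 1))).
  assert (Hodd : odd_mass = EL + ER).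
  { unfold odd_mass, EL, ER. replace (2 * n)%nat with (S t + r)%nat by lia. now rewrite ssum_add. }
  assert (Heven : even_mass = OL + OR).
  { unfold even_mass, OL, OR. replace (2 * n - 1)%nat with (t + r)%nat by lia.
    now rewrite ssum_add. }
  assert (HEL : EL = tap 0 + ssum t (fun a => tap (2 * S a))) by (unfold EL; now rewrite ssum_Sl).
  assert (Hcross : OL * ER <= ssum t (fun a => tap (2 * S a)) * OR).
  { unfold OL, OR, ER. rewrite !ssum_mult. apply ssum_le. intros a Ha. apply ssum_le. intros b Hb.
    pose proof (tap_cross_le (2 * a + 1) (2 * (S t + b)) ltac:(lia) ltac:(lia)) as H.
    replace (2 * a + 1 + 1)%nat with (2 * S a)%nat in H by lia.
    now replace (2 * (S t + b) - 1)%nat with (2 * (t + b) + 1)%nat in H by lia. }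
  assert (0 < OR) by (apply ssum_pos; [lia|intros; apply tap_pos; lia]).
  assert (0 < tap 0) by (apply tap_pos; lia).
  rewrite Hodd, Heven, HEL. nra.
Qed.

Lemma diff_mask_pos i t : (i = 0 \/ i = 1)%Z -> (t < 2 * n - 1)%nat -> 0 < diff_mask i t.
Proof.
  intros Hi Ht. pose proof even_mass_pos. pose proof odd_mass_pos.
  unfold diff_mask, even_mask, odd_mask. rewrite !ssum_div. destruct Hi as [-> | ->].
  - change (0 =? 0)%Z with true; cbv iota.
    pose proof (even_prefix_dominates t Ht).
    apply Rmult_lt_0_compat; [lra|]. apply Rlt_0_minus.
    apply Rmult_lt_reg_r with (even_mass * odd_mass); [nra|]. field_simplify; lra.
  - change (1 =? 0)%Z with false; cbv iota.
    pose proof (odd_prefix_dominates t Ht).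
    apply Rmult_lt_0_compat; [lra|]. apply Rlt_0_minus.
    apply Rmult_lt_reg_r with (even_mass * odd_mass); [nra|]. field_simplify; lra.
Qed.

Lemma S1_C1 : C1_scheme (S1 phi lam).
Proof.
  destruct (finite_pos_lower_bound (2 * n - 1) (fun t => Rmin (diff_mask 0 t) (diff_mask 1 t)))
    as [th [Hth Hle]].
  { intros t Ht. apply Rmin_pos; apply diff_mask_pos; auto. }
  set (theta := Rmin th (1 / 2)).
  assert (Htheta : 0 < theta < 1)
    by (unfold theta; split; [apply Rmin_pos|pose proof (Rmin_r th (1 / 2))]; lra).
  assert (Hconvex : forall i, (i = 0 \/ i = 1)%Z -> convex_weights (2 * n - 1) (diff_mask i)).
  { intros i Hi. split; [intros; left; now apply diff_mask_pos|now apply diff_mask_sum]. }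
  assert (Hge : forall i t, (i = 0 \/ i = 1)%Z -> (t < 2 * n - 1)%nat -> theta <= diff_mask i t).
  { intros i t Hi Ht. specialize (Hle t Ht). unfold theta.
    eapply Rle_trans; [apply Rmin_l|]. eapply Rle_trans; [exact Hle|].
    destruct Hi as [-> | ->]; [apply Rmin_l|apply Rmin_r]. }
  pose proof (window_rate_bounds theta Htheta).
  apply (derived_scheme_C1 (S1 phi lam) (window_scheme n diff_mask) (INR n) (INR n)
           (IZR (4 * Z.of_nat n) / window_rate theta) (window_rate theta)).
  - apply pos_INR.
  - apply pos_INR.
  - apply Rdiv_le_0_compat; [apply IZR_le; lia|lra].
  - exact H.
  - intros f d Hd i. rewrite S1_eq_mask_scheme. unfold mask_scheme.
    rewrite convex_sub by (apply mask_convex, Zmod2_cases).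
    apply (convex_abs_bound _ _ (mask_convex _ (Zmod2_cases i))). intros t Ht.
    eapply Rle_trans; [now apply diff_le_dist|].
    apply Rmult_le_compat_r; [exact (diff_le_nonneg f d Hd)|].
    rewrite INR_IZR_INZ. apply IZR_le. lia.
  - intros f k. unfold fdiff at 1. rewrite !S1_eq_mask_scheme. apply mask_scheme_fdiff.
  - apply window_scal.
  - now apply window_sup.
  - now apply window_step.
  - now apply (window_contract n diff_mask Hconvex Hn theta).
Qed.

End Masks.

Lemma Rpower_base_1 y : Rpower 1 y = 1.
Proof. unfold Rpower. rewrite ln_1, Rmult_0_r, exp_0. reflexivity. Qed.

Lemma Rpower_le_1 c r : 0 < c <= 1 -> 0 <= r -> Rpower c r <= 1.
Proof. intros Hc Hr. rewrite <- (Rpower_base_1 r). apply Rle_Rpower_l; lra. Qed.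

Lemma Rpower_ge_1 c r : 1 <= c -> 0 <= r -> 1 <= Rpower c r.
Proof. intros Hc Hr. rewrite <- (Rpower_base_1 r). apply Rle_Rpower_l; lra. Qed.

Lemma Rpower_lt_1 c r : 0 < c < 1 -> 0 < r -> Rpower c r < 1.
Proof. intros Hc Hr. rewrite <- (Rpower_base_1 r). apply Rlt_Rpower_l; lra. Qed.

(* [u |-> u ^ p - 1 - p (u - 1)] vanishes at [1], decreases before it and increases after it. *)
Lemma Rpower_bernoulli p u : 1 <= p -> 0 < u -> 1 + p * (u - 1) <= Rpower u p.
Proof.
  intros Hp Hu. set (f := fun x => Rpower x p - 1 - p * (x - 1)).
  set (f' := fun c => p * Rpower c (p - 1) - p).
  assert (Hd : forall c, 0 < c -> derivable_pt_lim f c (f' c)).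
  { intros c Hc. unfold f, f'.
    replace (p * Rpower c (p - 1) - p) with (p * Rpower c (p - 1) - 0 - p * (1 - 0)) by ring.
    apply derivable_pt_lim_minus; [apply derivable_pt_lim_minus|].
    - now apply derivable_pt_lim_power.
    - apply derivable_pt_lim_const.
    - apply derivable_pt_lim_scal, derivable_pt_lim_minus;
        [apply derivable_pt_lim_id|apply derivable_pt_lim_const]. }
  assert (Hf1 : f 1 = 0) by (unfold f; rewrite Rpower_base_1; ring).
  enough (0 <= f u) by (unfold f in *; lra).
  destruct (Rtotal_order u 1) as [Hlt|[->|Hgt]]; [| lra |].
  - destruct (MVT_cor2 f f' u 1 Hlt) as [c [Hmvt Hc]]; [intros c Hc; apply Hd; lra|].
    assert (Rpower c (p - 1) <= 1) by (apply Rpower_le_1; lra).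
    assert (f' c <= 0) by (unfold f'; nra). nra.
  - destruct (MVT_cor2 f f' 1 u Hgt) as [c [Hmvt Hc]]; [intros c Hc; apply Hd; lra|].
    assert (1 <= Rpower c (p - 1)) by (apply Rpower_ge_1; lra).
    assert (0 <= f' c) by (unfold f'; nra). nra.
Qed.

Lemma rpow_nonneg x p : 0 <= rpow x p.
Proof. unfold rpow. destruct (Rle_dec x 0); [lra|left; apply exp_pos]. Qed.

Lemma rpow_Rpower x p : 0 < x -> rpow x p = Rpower x p.
Proof. intros. unfold rpow. destruct (Rle_dec x 0); [lra|reflexivity]. Qed.

Lemma rpow_nonpos x p : x <= 0 -> rpow x p = 0.
Proof. intros. unfold rpow. destruct (Rle_dec x 0); [reflexivity|lra]. Qed.

Lemma rpow_lt_1 x p : 0 <= x < 1 -> 0 < p -> rpow x p < 1.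
Proof.
  intros [[Hx|<-] Hx1] Hp; [rewrite rpow_Rpower by lra; now apply Rpower_lt_1|].
  rewrite rpow_nonpos; lra.
Qed.

Lemma rpow_bernoulli p s : 1 <= p -> -1 <= s -> 1 + p * s <= rpow (1 + s) p.
Proof.
  intros Hp Hs. destruct (Req_dec s (-1)) as [->|Hne]; [rewrite rpow_nonpos; nra|].
  rewrite rpow_Rpower by lra. pose proof (Rpower_bernoulli p (1 + s) Hp ltac:(lra)).
  now replace (1 + s - 1) with s in H by ring.
Qed.

Lemma rpow_mult m z p : 0 < m -> 0 <= z -> rpow (m * z) p = Rpower m p * rpow z p.
Proof.
  intros Hm [Hz|<-].
  - rewrite !rpow_Rpower by nra. now rewrite Rpower_mult_distr.
  - rewrite Rmult_0_r, !rpow_nonpos by lra. ring.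
Qed.

Lemma rpow_le_compat a b p : 0 < p -> 0 <= a <= b -> rpow a p <= rpow b p.
Proof.
  intros Hp [[Ha|<-] Hab].
  - rewrite !rpow_Rpower by lra. apply Rle_Rpower_l; lra.
  - rewrite (rpow_nonpos 0) by lra. apply rpow_nonneg.
Qed.

(* Writing [a, b] as [m (1 - s), m (1 + s)], this is Bernoulli's inequality at [s] and [- s]. *)
Lemma rpow_midpoint_convex a b p : 1 <= p -> 0 <= a -> 0 <= b ->
  rpow ((a + b) / 2) p <= (rpow a p + rpow b p) / 2.
Proof.
  intros Hp Ha Hb. set (m := (a + b) / 2).
  destruct (Req_dec m 0) as [Hm|Hm].
  { assert (a = 0 /\ b = 0) as [-> ->] by (unfold m in Hm; lra).
    rewrite Hm, !rpow_nonpos by lra. lra. }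
  assert (Hm' : 0 < m) by (unfold m in *; lra).
  set (s := (b - a) / (2 * m)).
  assert (Ea : a = m * (1 - s)) by (unfold s, m in *; field; lra).
  assert (Eb : b = m * (1 + s)) by (unfold s, m in *; field; lra).
  assert (Hs : -1 <= s <= 1) by (split; apply Rmult_le_reg_l with m; nra).
  rewrite Ea, Eb, !rpow_mult by lra.
  replace m with (m * 1) at 1 by ring.
  rewrite rpow_mult, rpow_Rpower, Rpower_base_1 by lra.
  pose proof (rpow_bernoulli p s Hp ltac:(lra)).
  pose proof (rpow_bernoulli p (- s) Hp ltac:(lra)).
  replace (1 + - s) with (1 - s) in H0 by ring.
  assert (0 < Rpower m p) by apply exp_pos. nra.
Qed.

(* Midpoint convexity of [|x| ^ p], then AM-GM. *)
Lemma one_minus_rpow_logconcave p y h : 1 <= p -> 0 < h ->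
  Rabs (y - h) < 1 -> Rabs (y + h) < 1 ->
  (1 - rpow (Rabs (y - h)) p) * (1 - rpow (Rabs (y + h)) p)
  <= (1 - rpow (Rabs y) p) * (1 - rpow (Rabs y) p).
Proof.
  intros Hp Hh H1 H2.
  set (A := rpow (Rabs (y - h)) p). set (B := rpow (Rabs (y + h)) p). set (C := rpow (Rabs y) p).
  assert (Hmid : Rabs y <= (Rabs (y - h) + Rabs (y + h)) / 2).
  { replace y with (((y - h) + (y + h)) / 2) at 1 by field.
    rewrite Rabs_div, (Rabs_pos_eq 2) by lra. apply Rmult_le_compat_r; [lra|apply Rabs_triang]. }
  assert (HC : C <= (A + B) / 2).
  { eapply Rle_trans; [apply rpow_le_compat; [lra|split; [apply Rabs_pos|exact Hmid]]|].
    apply rpow_midpoint_convex; auto; apply Rabs_pos. }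
  assert (A < 1) by (apply rpow_lt_1; [split; [apply Rabs_pos|]|]; lra).
  assert (B < 1) by (apply rpow_lt_1; [split; [apply Rabs_pos|]|]; lra).
  assert (0 <= A) by apply rpow_nonneg. assert (0 <= B) by apply rpow_nonneg.
  assert ((1 - A) * (1 - B) <= (1 - (A + B) / 2) * (1 - (A + B) / 2))
    by (pose proof (Rle_0_sqr (A - B)); unfold Rsqr in *; nra).
  nra.
Qed.

Section PowerWeight.
Variables (lam : R) (n : nat) (p q : R).
Hypothesis Hn : (2 <= n)%nat.
Hypothesis Hlam : 2 * INR n - 1 < lam < 2 * INR n.
Hypothesis Hp : 1 <= p.
Hypothesis Hq : 0 < q.

Let phi := fun x => rpow (1 - rpow x p) q.
Let y K := IZR (Z.of_nat K - (2 * Z.of_nat n - 1)) / lam.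

Let Hlam_pos : 0 < lam.
Proof. assert (2 <= INR n) by (replace 2 with (INR 2) by reflexivity; apply le_INR; lia). lra. Qed.

Lemma tap_eq K : tap phi lam n K = rpow (1 - rpow (Rabs (y K)) p) q.
Proof. unfold tap, wgt, phi, y. rewrite Rabs_div, (Rabs_pos_eq lam) by lra. reflexivity. Qed.

Lemma abs_y_lt_1 K : (K <= 4 * n - 2)%nat -> Rabs (y K) < 1.
Proof.
  intros HK. unfold y. rewrite Rabs_div, (Rabs_pos_eq lam) by lra.
  apply Rmult_lt_reg_r with lam; [lra|]. unfold Rdiv. rewrite Rmult_assoc, Rinv_l, Rmult_1_r by lra.
  rewrite Rmult_1_l. apply (abs_lt_lambda n lam ltac:(lia) Hlam). lia.
Qed.

Lemma y_shift K : (1 <= K)%nat -> y (K - 1) = y K - / lam /\ y (K + 1) = y K + / lam.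
Proof.
  intros HK. unfold y.
  replace (Z.of_nat (K - 1) - (2 * Z.of_nat n - 1))%Z
    with (Z.of_nat K - (2 * Z.of_nat n - 1) - 1)%Z by lia.
  replace (Z.of_nat (K + 1) - (2 * Z.of_nat n - 1))%Z
    with (Z.of_nat K - (2 * Z.of_nat n - 1) + 1)%Z by lia.
  rewrite minus_IZR, plus_IZR. split; field; lra.
Qed.

Lemma power_weight_base_pos K : (K <= 4 * n - 2)%nat -> 0 < 1 - rpow (Rabs (y K)) p.
Proof.
  intros HK. pose proof (rpow_lt_1 (Rabs (y K)) p).
  pose proof (Rabs_pos (y K)). pose proof (abs_y_lt_1 K HK). lra.
Qed.

Lemma power_weight_tap_pos K : (K <= 4 * n - 2)%nat -> 0 < tap phi lam n K.
Proof.
  intros HK. rewrite tap_eq, rpow_Rpower by (now apply power_weight_base_pos). apply exp_pos.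
Qed.

Lemma power_weight_tap_logconcave k : (1 <= k)%nat -> (k + 1 <= 4 * n - 2)%nat ->
  tap phi lam n (k - 1) * tap phi lam n (k + 1) <= tap phi lam n k * tap phi lam n k.
Proof.
  intros Hk1 Hk2. rewrite !tap_eq.
  pose proof (power_weight_base_pos (k - 1) ltac:(lia)).
  pose proof (power_weight_base_pos (k + 1) ltac:(lia)).
  pose proof (power_weight_base_pos k ltac:(lia)).
  rewrite (rpow_Rpower (1 - rpow (Rabs (y (k - 1))) p)),
    (rpow_Rpower (1 - rpow (Rabs (y (k + 1))) p)),
    (rpow_Rpower (1 - rpow (Rabs (y k)) p)), !Rpower_mult_distr by auto.
  apply Rle_Rpower_l; [lra|]. split; [nra|].
  pose proof (abs_y_lt_1 (k - 1) ltac:(lia)). pose proof (abs_y_lt_1 (k + 1) ltac:(lia)).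
  destruct (y_shift k Hk1) as [Eminus Eplus]. rewrite Eminus, Eplus in *.
  apply one_minus_rpow_logconcave; auto. apply Rinv_0_lt_compat. lra.
Qed.

End PowerWeight.

Theorem corollary4p6 (n : nat) (lambda : R) (phi : R -> R) :
  (2 <= n)%nat ->
  2 * INR n - 1 < lambda < 2 * INR n ->
  (phi = (fun _ => 1) \/
   exists p q : R, 1 <= p /\ 0 < q /\ phi = (fun x => rpow (1 - rpow x p) q)) ->
  C1_scheme (S1 phi lambda).
Proof.
  intros Hn Hlam [-> | [p [q [Hp [Hq ->]]]]].
  - apply (S1_C1 _ lambda n Hn Hlam); unfold tap, wgt; intros; lra.
  - apply (S1_C1 _ lambda n Hn Hlam).
    + now apply power_weight_tap_pos.
    + now apply power_weight_tap_logconcave.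
Qed.
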